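(* Let $\Lambda$ be a positive integer, $r\in[\Lambda-1]$, and $K_\alpha\ge 0$ integers for $\alpha\in[\Lambda-r]$, not all zero. For the MADC model with Generalized Combinatorial MRG (GC-MRG) having $\Lambda$ mapper nodes and $K=\sum_{\alpha\in[\Lambda-r]}K_\alpha\binom{\Lambda}{\alpha}$ reducer nodes, the computation load is $r$ and the communication load $$L(r)=\frac{1}{K}\sum_{\alpha\in[\Lambda-r]}\frac{K_\alpha\binom{\Lambda-r}{\alpha}}{\binom{r+\alpha}{r}-1}$$ is achievable.
   Context: Notation: $[0,n)=\{0,1,\dots,n-1\}$, $[n]=\{1,\dots,n\}$. MADC (multi-access distributed computing) model: There are $\Lambda$ mapper nodes indexed by $[0,\Lambda)$ and $K$ reducer nodes. There are $N$ input files $w_0,\dots,w_{N-1}\in\mathbb{F}_{2^d}$ and $Q$ output functions $\phi_q:\mathbb{F}_{2^d}^N\to\mathbb{F}_{2^b}$, $q\in[0,Q)$, of the form $\phi_q(w_0,\dots,w_{N-1})=h_q(v_{q,0},\dots,v_{q,N-1})$, where $v_{q,n}=g_{q,n}(w_n)\in\mathbb{F}_{2^t}$ is called an intermediate value (IV). Each reducer node $k$ is assigned a set $\mathcal W_k\subseteq[0,Q)$ of $Q/K$ output functions, these sets being pairwise disjoint. The files are partitioned into $F$ disjoint batches of $N/F$ files each. Map phase: each mapper node $\lambda$ stores a set $M_\lambda$ of batches and computes all IVs $v_{q,n}$, $q\in[0,Q)$, for all files $w_n$ in its stored batches. Each reducer node is connected to a set of mapper nodes and has access to every batch stored at any mapper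 node it is connected to, together with all IVs computed from those batches. Shuffle phase: each reducer node $k$ broadcasts to all other reducer nodes, error-free, a message $\mathbf X_k$ of $l_k$ bits that is a function of the IVs it has access to. Reduce phase: each reducer node $k$ must recover all IVs $v_{q,n}$ with $q\in\mathcal W_k$, $n\in[0,N)$, from the received messages and the IVs it has access to. The computation load is $r=\sum_{\lambda}|M_\lambda|/F$ and the communication load is $L=\sum_{k}l_k/(QNt)$. A communication load $L$ is achievable for a given model if there exists a shuffle/reduce scheme satisfying all decoding requirements that attains $L$ (for a suitable choice of the number of files per batch, the number of functions per reducer, and the IV length $t$). GC-MRG (Generalized Combinatorial MRG): the files are split into $F=\binom{\Lambda}{r}$ batches $B_T$, one for each $T\subset[0,\Lambda)$ with $|T|=r$; mapper node $\lambda$ stores exactly the batches $B_T$ with $\lambda\in T$; for each $\alpha\in[\Lambda-r]$ and each $\alpha$-subset $U\subset[0,\Lambda)$ there are exactly $K_\alpha$ reducer nodes connected exactly to the mapper nodes in $U$ (such a reducer has access to $B_T$ iff $T\cap U\neq\emptyset$). (Reducer nodes connected to more than $\Lambda-r$ mapper nodes would access all batches and are not counted.) *)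

From mathcomp Require Import all_boot all_order all_algebra.
Set Implicit Arguments. Unset Strict Implicit. Unset Printing Implicit Defensive.
Import GRing.Theory Num.Theory.

(* A table of intermediate values v_{q,n} in F_{2^t}, represented as t bits. *)
Definition IV (Q N t : nat) := 'I_Q -> 'I_N -> t.-tuple bool.

Definition mask (Q N t : nat) (acc : pred 'I_N) (v : IV Q N t) : IV Q N t :=
  fun q n => if acc n then v q n else nseq_tuple t false.

Definition access (Lam K N : nat) (B : finType) (M : 'I_Lam -> {set B})
  (conn : 'I_K -> {set 'I_Lam}) (batch : 'I_N -> B) (k : 'I_K) : pred 'I_N :=
  fun n => [exists l, (l \in conn k) && (batch n \in M l)].

Definition comp_load (Lam : nat) (B : finType) (M : 'I_Lam -> {set B}) : rat :=
  (\sum_(l < Lam) #|M l|)%:R / #|B|%:R.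

(* Achievability of communication load L for the MADC model with batch type B
   (F = #|B| batches), mapper storage M and reducer connectivity conn:
   for a suitable number m of files per batch (N = F*m), number s of functions
   per reducer (Q = K*s), IV length t, batch assignment of files, function
   assignment W, message lengths len, encoders X and decoders dec. *)
Definition MADC_achievable (Lam K : nat) (B : finType) (M : 'I_Lam -> {set B})
  (conn : 'I_K -> {set 'I_Lam}) (L : rat) : Prop :=
  exists (m s t : nat) (batch : 'I_(#|B| * m) -> B)
    (W : 'I_K -> {set 'I_(K * s)}) (len : 'I_K -> nat)
    (X : 'I_K -> IV (K * s) (#|B| * m) t -> seq bool)
    (dec : 'I_K -> ('I_K -> seq bool) -> IV (K * s) (#|B| * m) t ->
           'I_(K * s) -> 'I_(#|B| * m) -> t.-tuple bool),
    [/\ 0 < m, 0 < s & 0 < t] /\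
    [/\ forall b : B, #|[set n | batch n == b]| = m,
        forall k, #|W k| = s &
        forall k k', k != k' -> [disjoint W k & W k']] /\
    [/\ forall k (v : IV (K * s) (#|B| * m) t),
          size (X k (mask (access M conn batch k) v)) = len k,
        forall k (v : IV (K * s) (#|B| * m) t) q n, q \in W k ->
          dec k (fun j => if j == k then [::]
                          else X j (mask (access M conn batch j) v))
                (mask (access M conn batch k) v) q n = v q n
      & ((\sum_(k < K) len k)%:R / (K * s * (#|B| * m) * t)%:R = L)%R].

Definition rsub (Lam r : nat) := {T : {set 'I_Lam} | #|T| == r}.

Definition gc_store (Lam r : nat) (l : 'I_Lam) : {set rsub Lam r} :=
  [set T : rsub Lam r | l \in val T].

Definition is_GC_MRG (Lam r : nat) (Kal : nat -> nat) (K : nat)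
  (conn : 'I_K -> {set 'I_Lam}) : Prop :=
  (forall k, 1 <= #|conn k| <= Lam - r) /\
  (forall U : {set 'I_Lam}, 1 <= #|U| <= Lam - r ->
     #|[set k | conn k == U]| = Kal #|U|).

Definition gc_load (Lam r : nat) (Kal : nat -> nat) (K : nat) : rat :=
  ((\sum_(1 <= a < (Lam - r).+1)
      (Kal a * 'C(Lam - r, a))%:R / ('C(r + a, r)%:R - 1)) / K%:R)%R.
Arguments is_GC_MRG : clear implicits.
Arguments gc_store : clear implicits. Arguments gc_load : clear implicits.

From Pilot Require Import Defs.
From mathcomp Require Import all_boot all_order all_algebra.
From mathcomp Require Import zify ring.
Set Implicit Arguments. Unset Strict Implicit. Unset Printing Implicit Defensive.
Import GRing.Theory Num.Theory.

(* Use one file per batch and one output function per reducer, so that files are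
   the r-subsets T of the mappers and a reducer attached to U = conn k needs its IV
   on every T disjoint from U.  Reducers attached to the same U are numbered, and
   only equally numbered reducers cooperate.  Fix a = |U| and an (a+r)-set Z ⊇ U.
   Each a-subset W of Z demands the IV on the file Z :\: W, which every reducer
   attached to another a-subset V of Z can compute (V meets Z :\: W).  Split that
   IV into 'C(r+a, r) - 1 segments, one per such V, and let V broadcast the XOR
   of the segments assigned to it.  The reducer attached to U computes all terms
   of V's XOR except its own segment, hence recovers it.  An IV length divisible
   by every 'C(r+a, r) - 1 makes the splitting exact, and counting the
   broadcast bits gives the load. *)

Lemma size_flatten_mkseq (A : Type) (f : A -> nat -> bool) c (s : seq A) :
  size (flatten [seq mkseq (f x) c | x <- s]) = size s * c.
Proof. by elim: s => //= x s IHs; rewrite size_cat size_mkseq IHs mulSn. Qed.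

Lemma nth_flatten_mkseq (A : Type) (x0 : A) (f : A -> nat -> bool) c (s : seq A) i j :
  i < size s -> j < c ->
  nth false (flatten [seq mkseq (f x) c | x <- s]) (i * c + j) = f (nth x0 s i) j.
Proof.
elim: s i => //= x s IHs [|i] lt_i lt_j; rewrite nth_cat size_mkseq.
  by rewrite mul0n add0n lt_j nth_mkseq.
by rewrite mulSn -addnA ltnNge leq_addr /= addKn IHs.
Qed.

Lemma bin_mul_bin_sub n a r :
  a + r <= n -> 'C(n, a) * 'C(n - a, r) = 'C(n - r, a) * 'C(n, r).
Proof.
move=> le_n.
have facts_gt0 : 0 < a`! * r`! * (n - a - r)`! by rewrite !muln_gt0 !fact_gt0.
apply/eqP; rewrite -(eqn_pmul2r facts_gt0); apply/eqP.
have -> : 'C(n, a) * 'C(n - a, r) * (a`! * r`! * (n - a - r)`!) =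
          'C(n, a) * (a`! * (n - a)`!).
  by rewrite -(bin_fact (_ : r <= n - a)); [ring | lia].
have -> : 'C(n - r, a) * 'C(n, r) * (a`! * r`! * (n - a - r)`!) =
          'C(n, r) * (r`! * (n - r)`!).
  by rewrite (_ : n - a - r = n - r - a) -?(bin_fact (_ : a <= n - r)); [ring | lia..].
by rewrite !bin_fact //; lia.
Qed.

Lemma card_rsub_val Lam r (T : rsub Lam r) : #|val T| = r.
Proof. exact/eqP/(valP T). Qed.

Lemma card_rsub Lam r : #|{: rsub Lam r}| = 'C(Lam, r).
Proof.
rewrite card_sig -[Lam in RHS]card_ord -card_draws.
by apply: eq_card => A; rewrite !inE.
Qed.

Lemma setUDKl (T : finType) (U A : {set T}) :
  [disjoint A & U] -> (U :|: A) :\: U = A.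
Proof. by rewrite setDUl setDv set0U => /setDidPl. Qed.

Lemma card_supersets (T : finType) (U : {set T}) r :
  #|[set S : {set T} | (U \subset S) && (#|S| == #|U| + r)]| = 'C(#|T| - #|U|, r).
Proof.
have -> : [set S : {set T} | (U \subset S) && (#|S| == #|U| + r)] =
          setU U @: [set A : {set T} | (A \subset ~: U) && (#|A| == r)].
  apply/setP => S; rewrite inE; apply/andP/imsetP => [[sub_US /eqP cardS]|].
    exists (S :\: U).
      by rewrite inE subDset setUCr subsetT /= cardsD (setIidPr sub_US) cardS addKn.
    apply/setP => x; rewrite !inE.
    by case: (boolP (x \in U)) => [/(subsetP sub_US) ->|].
  move=> [A]; rewrite inE -disjoints_subset => /andP[disj /eqP cardA] ->.
  split; first exact: subsetUl.
  rewrite disjoint_sym in disj.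
  by rewrite cardsU (disjoint_setI0 disj) cards0 subn0 cardA.
rewrite card_in_imset ?cards_draws; first by congr 'C(_, _); have := cardsC U; lia.
move=> A B; rewrite !inE -!disjoints_subset => /andP[disjA _] /andP[disjB _] eq_AB.
by rewrite -(setUDKl disjA) eq_AB setUDKl.
Qed.

Lemma meets_setD (T : finType) (Z V W : {set T}) :
  V \subset Z -> #|V| = #|W| -> V != W -> ~~ [disjoint V & Z :\: W].
Proof.
move=> sub_VZ cardV; apply: contra => disj; rewrite eqEcard cardV leqnn andbT.
apply/subsetP => x xV; apply: contraFT (disjointFr disj xV) => xNW.
by rewrite !inE xNW (subsetP sub_VZ).
Qed.

Lemma sum_by_fibres (I : finType) (f : I -> nat) lo hi (G : nat -> nat) :
  (forall i, lo <= f i < hi) ->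
  \sum_(i : I) G (f i) = \sum_(lo <= a < hi) #|[set i | f i == a]| * G a.
Proof.
move=> f_range.
transitivity (\sum_(lo <= a < hi) \sum_(i : I) (f i == a) * G a); last first.
  apply: eq_bigr => a _; rewrite -sum_nat_const [RHS]big_mkcond.
  by apply: eq_bigr => i _; rewrite inE; case: (f i == a); rewrite ?mul1n.
rewrite [RHS]exchange_big; apply: eq_bigr => i _ /=.
rewrite (bigD1_seq (f i)) /= ?iota_uniq ?mem_index_iota ?f_range // eqxx mul1n big1 ?addn0 //.
by move=> a; rewrite eq_sym => /negbTE ->.
Qed.

Lemma comp_load_gc_store Lam r : r <= Lam -> comp_load (gc_store Lam r) = (r%:R)%R.
Proof.
move=> le_r; rewrite /comp_load.
have -> : \sum_(l < Lam) #|gc_store Lam r l| = #|{: rsub Lam r}| * r.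
  transitivity (\sum_(l < Lam) \sum_(T : rsub Lam r) (l \in val T : nat)).
    apply: eq_bigr => l _; rewrite -sum1_card big_mkcond.
    by apply: eq_bigr => T _; rewrite inE; case: (l \in val T).
  rewrite exchange_big -sum_nat_const; apply: eq_bigr => T _.
  rewrite -[in RHS](card_rsub_val T) -sum1_card [RHS]big_mkcond.
  by apply: eq_bigr => l _; case: (l \in val T).
have F_gt0 : 0 < #|{: rsub Lam r}| by rewrite card_rsub bin_gt0.
by rewrite natrM mulrAC mulfV ?mul1r // pnatr_eq0 -lt0n.
Qed.

Section Scheme.

Variables (Lam r : nat) (Kal : nat -> nat) (K : nat) (conn : 'I_K -> {set 'I_Lam}).

Local Notation file := 'I_(#|{: rsub Lam r}| * 1).

Definition batch_of (n : file) : rsub Lam r := enum_val (cast_ord (muln1 _) n).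
Definition file_of (T : rsub Lam r) : file := cast_ord (esym (muln1 _)) (enum_rank T).
Definition fun_of (k : 'I_K) : 'I_(K * 1) := cast_ord (esym (muln1 K)) k.

Lemma file_ofK : cancel file_of batch_of.
Proof.
move=> T; rewrite /batch_of /file_of (_ : cast_ord _ _ = enum_rank T) ?enum_rankK //.
exact: val_inj.
Qed.

Lemma batch_ofK : cancel batch_of file_of.
Proof. by move=> n; apply: val_inj; rewrite /= enum_valK. Qed.

Local Notation accessible := (access (gc_store Lam r) conn batch_of).

Lemma accessibleE k n : accessible k n = ~~ [disjoint conn k & val (batch_of n)].
Proof.
apply/existsP/pred0Pn => -[l /andP[lk lT]]; exists l; apply/andP; split => //.
- by rewrite /gc_store inE in lT.
- by rewrite /gc_store inE.
Qed.

(* The number of a-subsets of an (a+r)-set other than a given one. *)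
Definition senders a := 'C(r + a, r) - 1.
Definition iv_len := \prod_(1 <= a < (Lam - r).+1) senders a.
Definition seg_len a := iv_len %/ senders a.

Local Notation ivs := (IV (K * 1) (#|{: rsub Lam r}| * 1) iv_len).

Implicit Types (U V W Z A : {set 'I_Lam}) (k d : 'I_K) (v : ivs) (a i j : nat).

(* Zero when A is not an r-set. *)
Definition iv_at (v : ivs) (k : 'I_K) (A : {set 'I_Lam}) : iv_len.-tuple bool :=
  if insub A is Some T then v (fun_of k) (file_of T) else nseq_tuple iv_len false.

Definition subsets_in (Z : {set 'I_Lam}) a :=
  [set W : {set 'I_Lam} | (W \subset Z) && (#|W| == a)].
Definition supersets (U : {set 'I_Lam}) :=
  enum [set Z : {set 'I_Lam} | (U \subset Z) && (#|Z| == #|U| + r)].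

Definition peers U := enum [set k | conn k == U].
Definition peer (d : 'I_K) U i := nth d (peers U) i.
Definition peer_rank k := index k (peers (conn k)).

(* Bit j of the segment assigned to sender V of the IV demanded by the i-th
   reducer attached to W on the file Z :\: W. *)
Definition piece (d : 'I_K) (v : ivs) i Z V W j : bool :=
  nth false (iv_at v (peer d W i) (Z :\: W))
      (index V (rem W (enum (subsets_in Z #|W|))) * seg_len #|W| + j).

Definition coded_bit (v : ivs) k Z j : bool :=
  \big[addb/false]_(W in subsets_in Z #|conn k| | W != conn k)
     piece k v (peer_rank k) Z (conn k) W j.

Definition encode k (v : ivs) : seq bool :=
  flatten [seq mkseq (coded_bit v k Z) (seg_len #|conn k|) | Z <- supersets (conn k)].

Definition msg_len k := size (supersets (conn k)) * seg_len #|conn k|.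

(* For an inaccessible file the IV reconstructed is that of fun_of k, the only
   function assigned to reducer k. *)
Definition decode k (msgs : 'I_K -> seq bool) (vk : ivs) (q : 'I_(K * 1)) (n : file) :
    iv_len.-tuple bool :=
  if accessible k n then vk q n else
  let U := conn k in let Z := U :|: val (batch_of n) in let c := seg_len #|U| in
  mktuple (fun p : 'I_iv_len =>
    let V := nth set0 (rem U (enum (subsets_in Z #|U|))) (p %/ c) in
    nth false (msgs (peer k V (peer_rank k))) (index Z (supersets V) * c + p %% c)
    (+) \big[addb/false]_(W in subsets_in Z #|U| | (W != V) && (W != U))
          piece k vk (peer_rank k) Z V W (p %% c)).

Hypothesis GC : is_GC_MRG Lam r Kal K conn.
Hypothesis r_gt0 : 0 < r.

Lemma senders_gt0 a : 0 < a -> 0 < senders a.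
Proof.
move=> a_gt0; rewrite subn_gt0 (@leq_trans 'C(r.+1, r)) //.
  by rewrite binSn ltnS.
by apply: leq_bin2l; lia.
Qed.

Lemma iv_len_gt0 : 0 < iv_len.
Proof.
rewrite /iv_len big_nat_cond prodn_cond_gt0 // => a /andP[/andP[a_gt0 _] _].
exact: senders_gt0.
Qed.

Lemma seg_lenK a : 1 <= a <= Lam - r -> seg_len a * senders a = iv_len.
Proof.
move=> a_range; rewrite divnK // /iv_len (bigD1_seq a) ?iota_uniq //=.
  exact: dvdn_mulr.
by rewrite mem_index_iota ltnS.
Qed.

Lemma seg_len_gt0 a : 1 <= a <= Lam - r -> 0 < seg_len a.
Proof.
by move/seg_lenK => len_eq; have := iv_len_gt0; rewrite -len_eq muln_gt0 => /andP[].
Qed.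

Lemma size_peers (U : {set 'I_Lam}) : 1 <= #|U| <= Lam - r -> size (peers U) = Kal #|U|.
Proof. by move=> U_range; rewrite -cardE GC.2. Qed.

Lemma peer_rank_lt k : peer_rank k < Kal #|conn k|.
Proof. by rewrite -size_peers ?GC.1 // index_mem mem_enum inE. Qed.

Lemma peer_self d k : peer d (conn k) (peer_rank k) = k.
Proof. by rewrite /peer nth_index // mem_enum inE. Qed.

Section PeerOf.

Variables (U : {set 'I_Lam}) (i : nat).
Hypotheses (U_range : 1 <= #|U| <= Lam - r) (lt_i : i < Kal #|U|).

Lemma peer_default d d' : peer d U i = peer d' U i.
Proof. by apply: set_nth_default; rewrite size_peers. Qed.

Lemma conn_peer d : conn (peer d U i) = U.
Proof.
have : peer d U i \in peers U by rewrite mem_nth ?size_peers.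
by rewrite mem_enum inE => /eqP.
Qed.

Lemma peer_rank_peer d : peer_rank (peer d U i) = i.
Proof. by rewrite /peer_rank conn_peer index_uniq ?enum_uniq ?size_peers. Qed.

End PeerOf.

Lemma iv_at_mask k' (v : ivs) (u : 'I_K) (A : {set 'I_Lam}) :
  ~~ [disjoint conn k' & A] ->
  iv_at (Defs.mask (accessible k') v) u A = iv_at v u A.
Proof.
move=> meet; rewrite /iv_at; case: insubP => // T _ valT.
by rewrite /Defs.mask accessibleE file_ofK valT meet.
Qed.

Lemma piece_mask k' d (v : ivs) i Z V W j :
  conn k' \subset Z -> #|conn k'| = #|W| -> conn k' != W ->
  piece d (Defs.mask (accessible k') v) i Z V W j = piece d v i Z V W j.
Proof. by move=> sub_Z cardW neqW; rewrite /piece iv_at_mask // meets_setD. Qed.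

Lemma encode_nth k (v : ivs) Z j :
  Z \in supersets (conn k) -> j < seg_len #|conn k| ->
  nth false (encode k v) (index Z (supersets (conn k)) * seg_len #|conn k| + j) =
  coded_bit v k Z j.
Proof. by move=> Zsup lt_j; rewrite (nth_flatten_mkseq Z) ?index_mem ?nth_index. Qed.

Lemma coded_bit_mask k (v : ivs) Z j :
  conn k \subset Z ->
  coded_bit (Defs.mask (accessible k) v) k Z j =
  \big[addb/false]_(W in subsets_in Z #|conn k| | W != conn k)
     piece k v (peer_rank k) Z (conn k) W j.
Proof.
move=> sub_Z; apply: eq_bigr => W /andP[]; rewrite inE => /andP[_ /eqP cardW] neqW.
by rewrite piece_mask // eq_sym.
Qed.

Lemma received_bit k (v : ivs) (V Z : {set 'I_Lam}) j :
  V \subset Z -> #|V| = #|conn k| -> #|Z| = #|conn k| + r -> j < seg_len #|V| ->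
  nth false (encode (peer k V (peer_rank k))
                    (Defs.mask (accessible (peer k V (peer_rank k))) v))
            (index Z (supersets V) * seg_len #|V| + j) =
  \big[addb/false]_(W in subsets_in Z #|V| | W != V) piece k v (peer_rank k) Z V W j.
Proof.
move=> sub_VZ cardV cardZ lt_j.
have V_range : 1 <= #|V| <= Lam - r by rewrite cardV GC.1.
have lt_i : peer_rank k < Kal #|V| by rewrite cardV peer_rank_lt.
set k' := peer k V _; have conn_k' : conn k' = V := conn_peer V_range lt_i k.
rewrite -conn_k' encode_nth ?coded_bit_mask; first last.
- by rewrite conn_k'.
- by rewrite mem_enum inE conn_k' sub_VZ cardZ cardV eqxx.
- by rewrite conn_k'.
rewrite peer_rank_peer //; apply: eq_bigr => W /andP[]; rewrite inE => /andP[_ /eqP cardW] _.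
by rewrite /piece (@peer_default W _ _ _ k' k) // cardW conn_k'.
Qed.

Lemma piece_self k (v : ivs) n V j :
  [disjoint conn k & val (batch_of n)] ->
  piece k v (peer_rank k) (conn k :|: val (batch_of n)) V (conn k) j =
  nth false (v (fun_of k) n)
    (index V (rem (conn k) (enum (subsets_in (conn k :|: val (batch_of n)) #|conn k|)))
       * seg_len #|conn k| + j).
Proof.
by move=> disj; rewrite /piece peer_self setUDKl 1?disjoint_sym // /iv_at valK batch_ofK.
Qed.

Lemma size_other_subsets U Z :
  U \subset Z -> #|Z| = #|U| + r -> size (rem U (enum (subsets_in Z #|U|))) = senders #|U|.
Proof.
move=> sub_UZ cardZ; rewrite size_rem ?mem_enum ?inE ?sub_UZ ?eqxx //.
rewrite -cardE cards_draws cardZ addnC.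
by rewrite -[X in 'C(_, X)](addKn r #|U|) bin_sub ?leq_addr // /senders subn1.
Qed.

Lemma decode_correct k v n :
  decode k (fun k' => if k' == k then [::] else encode k' (Defs.mask (accessible k') v))
         (Defs.mask (accessible k) v) (fun_of k) n = v (fun_of k) n.
Proof.
rewrite /decode accessibleE; case: ifP => [acc | /negbFE disj_UT].
  by rewrite /Defs.mask accessibleE acc.
set U := conn k; set T := val (batch_of n); set Z := U :|: T; set a := #|U|.
set c := seg_len a; set E := enum (subsets_in Z a).
have a_range : 1 <= a <= Lam - r := GC.1 k.
have cardZ : #|Z| = a + r.
  by rewrite cardsU (disjoint_setI0 disj_UT) cards0 subn0 card_rsub_val.
have size_others := size_other_subsets (subsetUl U T) cardZ.
apply: eq_from_tnth => p; rewrite tnth_mktuple.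
have c_gt0 : 0 < c := seg_len_gt0 a_range.
have lt_b : p %/ c < size (rem U E) by rewrite ltn_divLR // size_others mulnC seg_lenK.
set V := nth set0 (rem U E) (p %/ c).
have : V \in rem U E by rewrite mem_nth.
rewrite mem_rem_uniq ?enum_uniq // !inE mem_enum inE.
case/andP=> neq_VU /andP[sub_VZ /eqP cardV].
rewrite ifF; last first.
  apply: contraNF neq_VU => /eqP/(congr1 conn).
  by rewrite conn_peer ?cardV ?peer_rank_lt // => ->.
have lt_j : p %% c < seg_len #|V| by rewrite cardV ltn_pmod.
have := received_bit v sub_VZ cardV cardZ lt_j; rewrite cardV => ->.
(* Of the XOR sent by V, only the term of W = U is unknown to reducer k. *)
rewrite (bigD1 U) /=; last first.
  by rewrite inE subsetUl eqxx eq_sym.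
rewrite [X in _ (+) X](eq_bigr (fun W => piece k v (peer_rank k) Z V W (p %% c))); last first.
  move=> W /andP[]; rewrite inE => /andP[sub_WZ /eqP cardW] /andP[_ neq_WU].
  by rewrite piece_mask ?subsetUl ?cardW // eq_sym.
set others := \big[addb/false]_(W in _ | _) _.
rewrite (_ : \big[addb/false]_(W | _) _ = others); last by apply: eq_bigl => W; rewrite andbA.
rewrite addbK piece_self // -/T -/Z -/a -/E index_uniq ?rem_uniq ?enum_uniq //.
by rewrite -divn_eq (tnth_nth false).
Qed.

Lemma card_reducers_of_size a :
  1 <= a <= Lam - r -> #|[set k | #|conn k| == a]| = Kal a * 'C(Lam, a).
Proof.
move=> a_range; rewrite -sum1dep_card (partition_big conn (fun U => #|U| == a)) //=.
rewrite -[Lam in 'C(Lam, a)]card_ord -card_draws -sum1dep_card big_distrr /= muln1.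
apply: eq_bigr => U /eqP cardU; rewrite -{}cardU in a_range *.
rewrite -GC.2 // -sum1dep_card; apply: eq_bigl => k.
by rewrite andb_idl // => /eqP->.
Qed.

Lemma msg_len_card k : msg_len k = 'C(Lam - #|conn k|, r) * seg_len #|conn k|.
Proof. by rewrite /msg_len /supersets -cardE card_supersets card_ord. Qed.

Lemma sum_msg_len :
  \sum_k msg_len k =
  \sum_(1 <= a < (Lam - r).+1) Kal a * 'C(Lam, a) * ('C(Lam - a, r) * seg_len a).
Proof.
rewrite (eq_bigr _ (fun k _ => msg_len_card k)).
rewrite (@sum_by_fibres _ (fun k => #|conn k|) 1 (Lam - r).+1
                        (fun a => 'C(Lam - a, r) * seg_len a)); last first.
  by move=> k; rewrite ltnS GC.1.
by apply: eq_big_nat => a a_range; rewrite card_reducers_of_size.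
Qed.

Lemma comm_load :
  r < Lam -> 0 < K ->
  ((\sum_k msg_len k)%:R / (K * 1 * (#|{: rsub Lam r}| * 1) * iv_len)%:R)%R =
  gc_load Lam r Kal K.
Proof.
move=> lt_r K_gt0; rewrite sum_msg_len /gc_load natr_sum !mulr_suml.
apply: eq_big_nat => a a_range; rewrite ltnS in a_range.
have sen_gt0 : 0 < senders a by apply: senders_gt0; case/andP: a_range.
have count_eq : Kal a * 'C(Lam, a) * ('C(Lam - a, r) * seg_len a) * senders a =
                Kal a * 'C(Lam - r, a) * ('C(Lam, r) * iv_len).
  transitivity (Kal a * ('C(Lam, a) * 'C(Lam - a, r)) * (seg_len a * senders a)); first ring.
  by rewrite bin_mul_bin_sub ?seg_lenK //; [ring | lia].
have sen_neq0 : ((senders a)%:R != 0 :> rat)%R by rewrite pnatr_eq0 -lt0n.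
have -> : ('C(r + a, r)%:R - 1 = (senders a)%:R :> rat)%R.
  by rewrite /senders natrB // ltnW // -subn_gt0.
rewrite -[X in (X / _)%R](mulfK sen_neq0) -natrM count_eq card_rsub !natrM.
field; rewrite sen_neq0 !pnatr_eq0 -!lt0n K_gt0 iv_len_gt0 bin_gt0 ltnW //.
Qed.

End Scheme.

Theorem theorem5 (Lam r : nat) (Kal : nat -> nat) (K : nat)
  (conn : 'I_K -> {set 'I_Lam}) :
  0 < Lam -> 1 <= r <= Lam - 1 ->
  (exists a, 1 <= a <= Lam - r /\ 0 < Kal a) ->
  K = \sum_(1 <= a < (Lam - r).+1) Kal a * 'C(Lam, a) ->
  is_GC_MRG Lam r Kal K conn ->
  comp_load (gc_store Lam r) = (r%:R)%R /\
  MADC_achievable (gc_store Lam r) conn (gc_load Lam r Kal K).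
Proof.
move=> Lam_gt0 /andP[r_gt0 le_r] [a0 [a0_range Kal_a0]] K_def GC.
have lt_r : r < Lam by lia.
split; first by apply: comp_load_gc_store; exact: ltnW.
have K_gt0 : 0 < K.
  have le_a0 : a0 <= Lam by lia.
  rewrite K_def (bigD1_seq a0) ?iota_uniq ?mem_index_iota ?ltnS //=.
  by rewrite addn_gt0 muln_gt0 Kal_a0 bin_gt0 le_a0.
exists 1, 1, (iv_len Lam r), (@batch_of Lam r), (fun k => [set fun_of k]),
  (msg_len r conn), (@encode Lam r K conn), (@decode Lam r K conn).
split; [|split].
- by rewrite iv_len_gt0.
- split=> [b | k | k k' neq_kk'].
  + rewrite -[RHS](cards1 (file_of b)); apply: eq_card => n; rewrite !inE.
    by apply/eqP/eqP => [<- | ->]; rewrite (batch_ofK, file_ofK).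
  + by rewrite cards1.
  + rewrite disjoints1 inE; apply: contra neq_kk' => /eqP/(congr1 val) eq_kk'.
    exact/eqP/val_inj.
- split=> [k v | k v q n | ]; first by rewrite size_flatten_mkseq.
  + by rewrite inE => /eqP->; rewrite (decode_correct GC r_gt0).
  + exact: comm_load.
Qed.
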